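(* Let $S$ be a dense subsemigroup of $((0,\infty),+)$ and let $B\subseteq S$. Then $B$ is central near zero if and only if there exist a dynamical system $(X,\langle T_s\rangle_{s\in S})$, points $x,y\in X$ and a neighbourhood $U$ of $y$ such that $x$ and $y$ are proximal near zero, $y$ is uniformly recurrent near zero, and $B=\{s\in S: T_s(x)\in U\}$.
   Context: ''Dense'' means dense in the usual topology of $(0,\infty)$. $\beta S$ is the Stone–Čech compactification of the discrete set $S$ (ultrafilters on $S$), with $+$ extended so that $(\beta S,+)$ is a compact right topological semigroup: $A\in p+q$ iff $\{x\in S:-x+A\in q\}\in p$, where $-x+A=\{y\in S:x+y\in A\}$. $O^{+}(S)=\{p\in\beta S: S\cap(0,\epsilon)\in p\text{ for every }\epsilon>0\}$, a compact right topological subsemigroup of $\beta S$; $K(O^{+}(S))$ is its smallest two-sided ideal. A set $B\subseteq S$ is central near zero iff there is an idempotent $p\in K(O^{+}(S))$ with $B\in p$. A dynamical system $(X,\langle T_s\rangle_{s\in S})$ consists of a compact Hausdorff space $X$ and continuous maps $T_s:X\to X$ with $T_s\circ T_t=T_{s+t}$. A subset $B\subseteq S$ is syndetic near zero iff for every $\epsilon>0$ there exist a finite nonempty $F\subseteq (0,\epsilon)\cap S$ and $\delta>0$ with $S\cap(0,\delta)\subseteq\bigcup_{t\in F}(-t+B)$. A point $y$ is uniformly recurrent near zero iff for each neighbourhood $W$ of $y$, $\{s\in S:T_s(y)\in W\}$ is syndetic near zero. Points $x,y$ are proximal near zero iff for every neighbourhood $U$ of the diagonal in $X\times X$ and every $\epsilon>0$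 there is $s\in S\cap(0,\epsilon)$ with $(T_s(x),T_s(y))\in U$. *)

From Stdlib Require Import Reals List.
Open Scope R_scope.

Definition dense_subsemigroup (S : R -> Prop) : Prop :=
  (forall s, S s -> 0 < s) /\
  (forall s t, S s -> S t -> S (s + t)) /\
  (forall a b, 0 <= a -> a < b -> exists s, S s /\ a < s /\ s < b).

(* ---------- beta S : ultrafilters on S ----------
   A point of beta S is a family p of subsets of S (subsets given as
   predicates on R contained in S). *)
Definition ultrafilter (S : R -> Prop) (p : (R -> Prop) -> Prop) : Prop :=
  (forall A, p A -> forall z, A z -> S z) /\
  p S /\
  ~ p (fun _ => False) /\
  (forall A C, p A -> p C -> p (fun z => A z /\ C z)) /\
  (forall A C, p A -> (forall z, C z -> S z) -> (forall z, A z -> C z) -> p C) /\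
  (forall A, (forall z, A z -> S z) -> p A \/ p (fun z => S z /\ ~ A z)).

Definition shift (S : R -> Prop) (x : R) (A : R -> Prop) : R -> Prop :=
  fun y => S y /\ A (x + y).

Definition bplus (S : R -> Prop) (p q : (R -> Prop) -> Prop) : (R -> Prop) -> Prop :=
  fun A => (forall z, A z -> S z) /\ p (fun x => S x /\ q (shift S x A)).

Definition ueq (p q : (R -> Prop) -> Prop) : Prop := forall A, p A <-> q A.

Definition in_Oplus (S : R -> Prop) (p : (R -> Prop) -> Prop) : Prop :=
  ultrafilter S p /\
  forall eps, 0 < eps -> p (fun x => S x /\ 0 < x /\ x < eps).

Definition two_sided_ideal (S : R -> Prop)
    (I : ((R -> Prop) -> Prop) -> Prop) : Prop :=
  (forall q, I q -> in_Oplus S q) /\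
  (exists q, I q) /\
  (forall q r, in_Oplus S q -> I r -> I (bplus S q r) /\ I (bplus S r q)).

(* K(O^+(S)), the smallest two-sided ideal = intersection of all ideals *)
Definition in_K (S : R -> Prop) (p : (R -> Prop) -> Prop) : Prop :=
  in_Oplus S p /\ forall I, two_sided_ideal S I -> I p.

Definition central_near_zero (S B : R -> Prop) : Prop :=
  exists p, in_K S p /\ ueq (bplus S p p) p /\ p B.

Definition topology (X : Type) (op : (X -> Prop) -> Prop) : Prop :=
  op (fun _ => True) /\
  op (fun _ => False) /\
  (forall U V, op U -> op V -> op (fun x => U x /\ V x)) /\
  (forall F : (X -> Prop) -> Prop, (forall U, F U -> op U) ->
      op (fun x => exists U, F U /\ U x)).

Definition compact (X : Type) (op : (X -> Prop) -> Prop) : Prop :=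
  forall F : (X -> Prop) -> Prop, (forall U, F U -> op U) ->
    (forall x, exists U, F U /\ U x) ->
    exists l : list (X -> Prop), (forall U, In U l -> F U) /\
      (forall x, exists U, In U l /\ U x).

Definition hausdorff (X : Type) (op : (X -> Prop) -> Prop) : Prop :=
  forall x y, x <> y -> exists U V, op U /\ op V /\ U x /\ V y /\
    (forall z, ~ (U z /\ V z)).

Definition continuous (X : Type) (op : (X -> Prop) -> Prop) (f : X -> X) : Prop :=
  forall U, op U -> op (fun x => U (f x)).

Definition nbhd (X : Type) (op : (X -> Prop) -> Prop) (y : X) (U : X -> Prop) : Prop :=
  exists V, op V /\ V y /\ forall z, V z -> U z.

Definition prod_open (X : Type) (op : (X -> Prop) -> Prop) (W : X * X -> Prop) : Prop :=
  forall a b, W (a, b) -> exists A C, op A /\ op C /\ A a /\ C b /\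
    forall u v, A u -> C v -> W (u, v).

Definition diag_nbhd (X : Type) (op : (X -> Prop) -> Prop) (U : X * X -> Prop) : Prop :=
  exists W, prod_open X op W /\ (forall x, W (x, x)) /\ forall z, W z -> U z.

Definition dynamical_system (S : R -> Prop) (X : Type) (op : (X -> Prop) -> Prop)
    (T : R -> X -> X) : Prop :=
  topology X op /\ compact X op /\ hausdorff X op /\
  (forall s, S s -> continuous X op (T s)) /\
  (forall s t, S s -> S t -> forall x, T s (T t x) = T (s + t) x).

Definition syndetic_near_zero (S B : R -> Prop) : Prop :=
  forall eps, 0 < eps -> exists (F : list R) (delta : R),
    F <> nil /\ (forall t, In t F -> S t /\ 0 < t /\ t < eps) /\ 0 < delta /\
    forall s, S s -> 0 < s -> s < delta ->
      exists t, In t F /\ shift S t B s.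

Definition unif_rec_near_zero (S : R -> Prop) (X : Type) (op : (X -> Prop) -> Prop)
    (T : R -> X -> X) (y : X) : Prop :=
  forall W, nbhd X op y W -> syndetic_near_zero S (fun s => S s /\ W (T s y)).

Definition proximal_near_zero (S : R -> Prop) (X : Type) (op : (X -> Prop) -> Prop)
    (T : R -> X -> X) (x y : X) : Prop :=
  forall U, diag_nbhd X op U -> forall eps, 0 < eps ->
    exists s, S s /\ 0 < s /\ s < eps /\ U (T s x, T s y).

(* If B is central near zero, let beta S act on itself, with an identity e
   adjoined, by T_s q = s + q.  For an idempotent p of K(O+(S)) containing B,
   the points e and p are proximal near zero because p + p = p, the point p is
   uniformly recurrent near zero because it lies in a minimal left ideal of
   O+(S), and B is the set of return times of e to the open set {q | B in q}.

   Conversely, proximality gives p in O+(S) along which the orbits of x and y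
   have a common limit, so every v in a minimal left ideal L of O+(S) contained
   in O+(S) + p has the same limit along both orbits.  Uniform recurrence of y
   makes {v in L | v-lim T_s y = y} a nonempty closed subsemigroup, which by
   Ellis' theorem contains an idempotent u; then u lies in K(O+(S)), the
   u-limit of T_s x is y, and so the return times of x to U, hence B, are in u. *)

From Stdlib Require Import Reals List Classical FunctionalExtensionality PropExtensionality ClassicalEpsilon Lra.
From mathcomp Require boolp classical_sets filter.
Open Scope R_scope.

Lemma zorn_premaximal (T : Type) (t0 : T) (le : T -> T -> Prop) :
  (forall t, le t t) -> (forall r s t, le r s -> le s t -> le r t) ->
  (forall A : T -> Prop, (forall s t, A s -> A t -> le s t \/ le t s) ->
     exists t, forall s, A s -> le s t) ->
  exists t, forall s, le t s -> le s t.
Proof.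
intros Hrefl Htrans Hchain.
destruct (@classical_sets.ZL_preorder T t0 (fun a b => boolp.asbool (le a b))) as [t Ht].
- intro t; apply boolp.asboolT, Hrefl.
- intros r s u a b; apply boolp.asboolT.
  apply (Htrans r s u); apply boolp.asboolW; assumption.
- intros A HA. destruct (Hchain A) as [t Ht].
  + intros s u As Au. destruct (HA s u As Au) as [h|h]; [left|right]; apply boolp.asboolW; exact h.
  + exists t. intros s As. apply boolp.asboolT, Ht, As.
- exists t. intros s Hs. apply boolp.asboolW, Ht, boolp.asboolT, Hs.
Qed.

(** * Ultrafilters on S *)

Section BetaS.
Variable S : R -> Prop.

Definition family := (R -> Prop) -> Prop.
Definition sub_S (A : R -> Prop) := forall z, A z -> S z.
Definition compl_S (A : R -> Prop) : R -> Prop := fun z => S z /\ ~ A z.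

Lemma uf_sub_S p A : ultrafilter S p -> p A -> sub_S A.
Proof. intros [h _] H; exact (h A H). Qed.

Lemma uf_S p : ultrafilter S p -> p S.
Proof. intros (_&h&_); exact h. Qed.

Lemma uf_mono p A C : ultrafilter S p -> p A ->
  (forall z, S z -> A z -> C z) -> sub_S C -> p C.
Proof.
intros (_&pS&_&pI&pU&_) pA AC SC.
apply (pU _ C (pI _ _ pA pS)); [exact SC|]. intros z [a s]; auto.
Qed.

Lemma uf_and p A C : ultrafilter S p -> p A -> p C -> p (fun z => A z /\ C z).
Proof. intros (_&_&_&pI&_); auto. Qed.

Lemma uf_nonempty p A : ultrafilter S p -> p A -> exists z, S z /\ A z.
Proof.
intros Hp pA. apply NNPP; intro N. destruct Hp as (_&pS&p0&pI&pU&_).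
apply p0, (pU _ _ (pI _ _ pA pS)); [intros z []|].
intros z [a s]; apply N; eauto.
Qed.

Lemma uf_compl p A : ultrafilter S p -> sub_S A -> ~ p A -> p (compl_S A).
Proof. intros (_&_&_&_&_&pD) SA N. destruct (pD A SA); tauto. Qed.

Lemma uf_not_compl p A : ultrafilter S p -> p A -> ~ p (compl_S A).
Proof.
intros Hp pA pC.
destruct (uf_nonempty p _ Hp (uf_and p _ _ Hp pA pC)) as (z&_&a&_&na). auto.
Qed.

Lemma uf_sub_eq p q : ultrafilter S p -> ultrafilter S q -> (forall A, p A -> q A) -> p = q.
Proof.
intros Hp Hq H. apply functional_extensionality; intro A.
apply propositional_extensionality; split; [apply H|]. intro qA.
apply NNPP; intro N. apply (uf_not_compl q A Hq qA), H, uf_compl; auto.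
exact (uf_sub_S q A Hq qA).
Qed.

Lemma uf_in_list {I : Type} p (l : list I) (P : I -> R -> Prop) :
  ultrafilter S p -> (forall i, In i l -> sub_S (P i)) ->
  p (fun z => exists i, In i l /\ P i z) -> exists i, In i l /\ p (P i).
Proof.
intros Hp. induction l as [|a l IH]; intros SP H.
- destruct (uf_nonempty p _ Hp H) as (z&_&i&[]&_).
- destruct (classic (p (P a))) as [h|h]; [exists a; simpl; auto|].
  destruct IH as (i&Hi&Hpi); [intros i Hi; apply SP; simpl; auto| |exists i; simpl; auto].
  apply (uf_mono p (fun z => (exists i, In i (a :: l) /\ P i z) /\ compl_S (P a) z)).
  + exact Hp.
  + apply uf_and, uf_compl; auto. apply SP; simpl; auto.
  + intros z _ [(i&[<-|Hi]&Hz) [_ Nz]]; [tauto|eauto].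
  + intros z (i&Hi&Hz). apply (SP i); simpl; auto.
Qed.

(* The ultrafilter lemma, through MathComp's [ultraFilterLemma] applied to the
   filter on [R] generated by the traces on [S] of a directed family. *)
Lemma directed_ultrafilter (G : family) :
  (exists E, G E) ->
  (forall E, G E -> exists z, S z /\ E z) ->
  (forall E1 E2, G E1 -> G E2 -> exists E3, G E3 /\ forall z, E3 z -> E1 z /\ E2 z) ->
  exists p, ultrafilter S p /\ forall E, G E -> p (fun z => S z /\ E z).
Proof.
intros [E0 GE0] Hne Hdir.
set (trace := fun E z => S z /\ E z).
assert (Ffilter : filter.Filter (filter.filter_from G trace)).
{ apply filter.filter_from_filter; [exists E0; exact GE0|].
  intros E1 E2 G1 G2. destruct (Hdir E1 E2 G1 G2) as (E3&G3&H3).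
  exists E3; [exact G3|]. intros z [Sz Ez]. destruct (H3 z Ez). split; split; assumption. }
assert (Fproper : filter.ProperFilter (filter.filter_from G trace)).
{ apply filter.filter_from_proper; [exact Ffilter|].
  intros E GE. destruct (Hne E GE) as (z&h). exists z; exact h. }
destruct (filter.ultraFilterLemma Fproper) as (U&HU&FU).
assert (Utrace : forall E, G E -> U (trace E)).
{ intros E GE. apply FU. exists E; [exact GE|]. intros z h; exact h. }
assert (US : U S).
{ apply (filter.filterS (P:=trace E0)); [intros z [Sz _]; exact Sz|auto]. }
exists (fun A => U A /\ sub_S A). split.
- split; [|split; [|split; [|split; [|split]]]].
  + intros A [_ h]; exact h.
  + split; [exact US|]. intros z h; exact h.
  + intros [U0 _]. exact (@filter.filter_not_empty _ U _ U0).
  + intros A C [UA SA] [UC _]. split; [apply filter.filterI; assumption|].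
    intros z [a _]; exact (SA z a).
  + intros A C [UA _] SC AC. split; [exact (filter.filterS AC UA)|exact SC].
  + intros A SA. destruct (filter.in_ultra_setVsetC A HU) as [h|h]; [left; split; assumption|].
    right. split; [|intros z [Sz _]; exact Sz].
    apply (filter.filterS (P:=classical_sets.setI S (classical_sets.setC A))).
    * intros z [Sz nA]; split; assumption.
    * apply filter.filterI; assumption.
- intros E GE. split; [apply Utrace, GE|intros z [Sz _]; exact Sz].
Qed.

(** * The semigroup beta S *)

Hypothesis Hadd : forall s t, S s -> S t -> S (s + t).

Lemma bplus_uf p q : ultrafilter S p -> ultrafilter S q -> ultrafilter S (bplus S p q).
Proof.
intros Hp Hq.
assert (Sshift : forall x A, sub_S (shift S x A)) by (intros x A z [h _]; exact h).
assert (Sfst : forall P : R -> Prop, sub_S (fun x => S x /\ P x)) by (intros P z [h _]; exact h).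
split; [|split; [|split; [|split; [|split]]]].
- intros A [h _]; exact h.
- split; [intros z h; exact h|].
  apply (uf_mono p S _ Hp (uf_S p Hp)); [|apply Sfst].
  intros x Sx _. split; [exact Sx|].
  apply (uf_mono q S _ Hq (uf_S q Hq)); [|apply Sshift]. intros y Sy _; split; auto.
- intros [_ H]. destruct (uf_nonempty p _ Hp H) as (x&_&_&H2).
  destruct (uf_nonempty q _ Hq H2) as (y&_&_&[]).
- intros A C [SA pA] [SC pC]. split; [intros z [a _]; auto|].
  apply (uf_mono p _ _ Hp (uf_and p _ _ Hp pA pC)); [|apply Sfst].
  intros x Sx [[_ a] [_ c]]. split; [exact Sx|].
  apply (uf_mono q _ _ Hq (uf_and q _ _ Hq a c)); [|apply Sshift].
  intros y Sy [[_ a1] [_ c1]]. split; auto.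
- intros A C [SA pA] SC AC. split; [exact SC|].
  apply (uf_mono p _ _ Hp pA); [|apply Sfst].
  intros x Sx [_ a]. split; [exact Sx|].
  apply (uf_mono q _ _ Hq a); [|apply Sshift]. intros y Sy [_ a1]; split; auto.
- intros A SA. destruct (classic (p (fun x => S x /\ q (shift S x A)))) as [h|h].
  + left. split; assumption.
  + right. split; [intros z [s _]; exact s|].
    apply (uf_mono p _ _ Hp (uf_compl p _ Hp (Sfst _) h)); [|apply Sfst].
    intros x Sx [_ N]. split; [exact Sx|].
    assert (N' : ~ q (shift S x A)) by tauto.
    apply (uf_mono q _ _ Hq (uf_compl q _ Hq (Sshift x A) N')); [|apply Sshift].
    intros y Sy [_ N2]. split; [exact Sy|]. split; [apply Hadd; assumption|].
    intro a; apply N2; split; assumption.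
Qed.

Lemma bplus_assoc p q r : ultrafilter S p -> ultrafilter S q -> ultrafilter S r ->
  bplus S (bplus S p q) r = bplus S p (bplus S q r).
Proof.
intros Hp Hq Hr. apply uf_sub_eq; [repeat apply bplus_uf; auto..|].
intros A [SA [_ H]]. split; [exact SA|].
apply (uf_mono p _ _ Hp H); [|intros x [h _]; exact h].
intros x Sx [_ H2]. split; [exact Sx|]. split; [intros z [h _]; exact h|].
apply (uf_mono q _ _ Hq H2); [|intros y [h _]; exact h].
intros y Sy [_ [_ H3]]. split; [exact Sy|].
apply (uf_mono r _ _ Hr H3); [|intros z [h _]; exact h].
intros z Sz [_ a]. split; [exact Sz|]. split; [apply Hadd; assumption|].
rewrite <- Rplus_assoc; exact a.
Qed.

Lemma Oplus_uf p : in_Oplus S p -> ultrafilter S p.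
Proof. intros [h _]; exact h. Qed.

Lemma Oplus_bplus p q : in_Oplus S p -> in_Oplus S q -> in_Oplus S (bplus S p q).
Proof.
intros [Hp Ep] [Hq Eq]. split; [apply bplus_uf; assumption|].
intros eps He. split; [intros z [a _]; exact a|].
apply (uf_mono p _ _ Hp (Ep (eps/2) ltac:(lra))); [|intros x [h _]; exact h].
intros x Sx (_&x1&x2). split; [exact Sx|].
apply (uf_mono q _ _ Hq (Eq (eps/2) ltac:(lra))); [|intros y [h _]; exact h].
intros y Sy (_&y1&y2). split; [exact Sy|]. split; [apply Hadd; assumption|split; lra].
Qed.


(** * Closed subsets of beta S *)

Definition closed_beta (C : family -> Prop) : Prop :=
  (forall p, C p -> ultrafilter S p) /\
  forall p, ultrafilter S p -> ~ C p ->
    exists A, p A /\ forall q, ultrafilter S q -> q A -> ~ C q.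

Lemma closed_adherent C p : closed_beta C -> ultrafilter S p ->
  (forall A, sub_S A -> (forall q, C q -> q A) -> p A) -> C p.
Proof.
intros [Cuf Copen] Hp H. apply NNPP; intro N.
destruct (Copen p Hp N) as (A&pA&HA).
set (A' := fun z => S z /\ A z).
assert (pA' : p A') by (apply (uf_mono p A A' Hp pA); [split; auto|intros z [s _]; exact s]).
apply (uf_not_compl p A' Hp pA'), H; [intros z [s _]; exact s|].
intros q Cq. apply uf_compl; [apply Cuf, Cq|intros z [s _]; exact s|].
intro qA'. apply (HA q (Cuf q Cq)); [|exact Cq].
apply (uf_mono q A' A (Cuf q Cq) qA'); [intros z _ [_ a]; exact a|exact (uf_sub_S p A Hp pA)].
Qed.

Lemma closed_inter C1 C2 : closed_beta C1 -> closed_beta C2 ->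
  closed_beta (fun p => C1 p /\ C2 p).
Proof.
intros [u1 o1] [u2 o2]. split; [intros p [h _]; auto|].
intros p Hp N. destruct (classic (C1 p)) as [c1|c1].
- assert (c2 : ~ C2 p) by tauto. destruct (o2 p Hp c2) as (A&pA&HA).
  exists A; split; [exact pA|]. intros q Hq qA [_ h]; exact (HA q Hq qA h).
- destruct (o1 p Hp c1) as (A&pA&HA).
  exists A; split; [exact pA|]. intros q Hq qA [h _]; exact (HA q Hq qA h).
Qed.

Lemma chain_inter_nonempty (Ch : (family -> Prop) -> Prop) :
  (forall C, Ch C -> closed_beta C /\ exists p, C p) ->
  (forall C1 C2, Ch C1 -> Ch C2 -> (forall p, C1 p -> C2 p) \/ (forall p, C2 p -> C1 p)) ->
  (exists C, Ch C) -> exists p, forall C, Ch C -> C p.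
Proof.
intros HC Htot [C0 HC0].
assert (Cuf : forall C q, Ch C -> C q -> ultrafilter S q) by (intros C q ChC; apply (HC C ChC)).
set (G := fun E => exists C, Ch C /\ forall q, C q -> q (fun z => S z /\ E z)).
destruct (directed_ultrafilter G) as (p&Hp&HGp).
- exists S, C0. split; [exact HC0|]. intros q Cq.
  apply (uf_mono q S _ (Cuf C0 q HC0 Cq) (uf_S q (Cuf C0 q HC0 Cq))); [auto|intros z [s _]; exact s].
- intros E (C&ChC&HE). destruct (proj2 (HC C ChC)) as [q Cq].
  destruct (uf_nonempty q _ (Cuf C q ChC Cq) (HE q Cq)) as (z&_&h). exists z; exact h.
- intros E1 E2 (C1&Ch1&H1) (C2&Ch2&H2). exists (fun z => E1 z /\ E2 z). split; [|auto].
  assert (both : forall C, Ch C -> (forall q, C q -> C1 q /\ C2 q) ->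
                   G (fun z => E1 z /\ E2 z)).
  { intros C ChC HCq. exists C. split; [exact ChC|]. intros q Cq.
    destruct (HCq q Cq) as [c1 c2].
    apply (uf_mono q _ _ (Cuf C q ChC Cq) (uf_and q _ _ (Cuf C q ChC Cq) (H1 q c1) (H2 q c2))).
    - intros z _ [[s a] [_ b]]. auto.
    - intros z [s _]; exact s. }
  destruct (Htot C1 C2 Ch1 Ch2) as [h|h]; [apply (both C1)|apply (both C2)]; auto.
- exists p. intros C ChC. apply closed_adherent; [apply (HC C ChC)|exact Hp|].
  intros A SA HA. apply (uf_mono p (fun z => S z /\ A z) A Hp); [|intros z _ [_ a]; exact a|exact SA].
  apply HGp. exists C. split; [exact ChC|]. intros q Cq.
  apply (uf_mono q A _ (Cuf C q ChC Cq) (HA q Cq)); [auto|intros z [s _]; exact s].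
Qed.

Lemma minimal_closed (Q : (family -> Prop) -> Prop) (C0 : family -> Prop) :
  (forall Ch : (family -> Prop) -> Prop, (forall C, Ch C -> Q C) ->
     Q (fun p => forall C, Ch C -> C p)) ->
  closed_beta C0 -> (exists p, C0 p) -> Q C0 ->
  exists L, closed_beta L /\ (exists p, L p) /\ Q L /\ (forall p, L p -> C0 p) /\
    forall L', closed_beta L' -> (exists p, L' p) -> Q L' -> (forall p, L' p -> L p) ->
      forall p, L p -> L' p.
Proof.
intros Qinter Cl0 Ne0 Q0.
set (P := fun C => closed_beta C /\ (exists p, C p) /\ Q C /\ forall p, C p -> C0 p).
assert (P0 : P C0) by (split; [|split; [|split]]; auto).
destruct (zorn_premaximal {C | P C} (exist _ C0 P0)
   (fun a b => forall p, proj1_sig b p -> proj1_sig a p)) as [[L PL] HL].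
- intros t p h; exact h.
- intros r s t h1 h2 p h; auto.
- intros Ch HCh. destruct (classic (exists a, Ch a)) as [[a0 Ha0]|NE].
  2: { exists (exist _ C0 P0). intros s Chs. exfalso; eauto. }
  set (Ch' := fun C => exists a, Ch a /\ C = proj1_sig a).
  set (I := fun p => forall C, Ch' C -> C p).
  assert (PI : P I).
  { split; [|split; [|split]].
    - split.
      + intros p Ip. apply (proj1 (proj1 (proj2_sig a0))), Ip. exists a0; auto.
      + intros p Hp Np. apply not_all_ex_not in Np. destruct Np as [C NC].
        apply imply_to_and in NC. destruct NC as [[a [Cha ->]] Na].
        destruct (proj2 (proj1 (proj2_sig a)) p Hp Na) as (A&pA&HA).
        exists A. split; [exact pA|]. intros q Hq qA Iq. apply (HA q Hq qA), Iq. exists a; split; [exact Cha|reflexivity].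
    - apply chain_inter_nonempty.
      + intros C (a&_&->). split; apply (proj2_sig a).
      + intros C1 C2 (a&Cha&->) (b&Chb&->). destruct (HCh a b Cha Chb); auto.
      + exists (proj1_sig a0), a0; auto.
    - apply Qinter. intros C (a&_&->). apply (proj2_sig a).
    - intros p Ip. apply (proj2 (proj2 (proj2 (proj2_sig a0)))), Ip. exists a0; auto. }
  exists (exist _ I PI). intros s Chs p Ip. apply Ip. exists s; auto.
- destruct PL as (PL1&PL2&PL3&PL4). exists L. split; [|split; [|split; [|split]]]; auto.
  intros L' Cl' Ne' Q' Sub'.
  exact (HL (exist _ L' (conj Cl' (conj Ne' (conj Q' (fun p h => PL4 p (Sub' p h)))))) Sub').
Qed.

Lemma closed_rtranslate M e : closed_beta M -> ultrafilter S e ->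
  closed_beta (fun p => exists q, M q /\ p = bplus S q e).
Proof.
intros HM He. assert (Muf : forall q, M q -> ultrafilter S q) by apply HM.
split; [intros p (q&Mq&->); apply bplus_uf; auto|].
intros p Hp N. apply NNPP; intro N2.
assert (H : forall A, p A -> exists q, M q /\ q (fun s => S s /\ e (shift S s A))).
{ intros A pA. apply NNPP; intro N3. apply N2. exists A. split; [exact pA|].
  intros q Hq qA (q'&Mq'&->). apply N3. exists q'. split; [exact Mq'|apply qA]. }
assert (eshift : forall A B s, (forall z, A z -> B z) -> e (shift S s A) -> e (shift S s B)).
{ intros A B s AB h. apply (uf_mono e _ _ He h); [|intros z [Sz _]; exact Sz].
  intros z Sz [_ a]. split; [exact Sz|]. apply AB, a. }
set (G := fun E => exists A B, p A /\ (forall q, M q -> q B) /\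
                     E = fun s => e (shift S s A) /\ B s).
destruct (directed_ultrafilter G) as (q&Hq&HGq).
- exists (fun s => e (shift S s S) /\ S s), S, S. split; [apply uf_S; auto|].
  split; [intros q Mq; apply uf_S; auto|reflexivity].
- intros E (A&B&pA&HB&->). destruct (H A pA) as (q&Mq&qA).
  destruct (uf_nonempty q _ (Muf q Mq) (uf_and q _ _ (Muf q Mq) qA (HB q Mq))) as (z&Sz&[_ a]&b).
  exists z. auto.
- intros E1 E2 (A1&B1&pA1&HB1&->) (A2&B2&pA2&HB2&->).
  exists (fun s => e (shift S s (fun z => A1 z /\ A2 z)) /\ (B1 s /\ B2 s)). split.
  + exists (fun z => A1 z /\ A2 z), (fun z => B1 z /\ B2 z).
    split; [apply uf_and; auto|]. split; [|reflexivity].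
    intros q Mq. apply uf_and; [apply Muf, Mq|apply HB1, Mq|apply HB2, Mq].
  + intros s [es [b1 b2]].
    split; (split; [|assumption]); refine (eshift _ _ s _ es); intros z [a1 a2]; assumption.
- apply N. exists q. split.
  + apply closed_adherent; auto. intros B SB HB.
    apply (uf_mono q _ B Hq (HGq _ (ex_intro _ S (ex_intro _ B (conj (uf_S p Hp) (conj HB eq_refl))))));
      [intros z _ (_&_&b); exact b|exact SB].
  + apply uf_sub_eq; [exact Hp|apply bplus_uf; auto|].
    intros A pA. split; [exact (uf_sub_S p A Hp pA)|].
    apply (uf_mono q _ _ Hq
      (HGq _ (ex_intro _ A (ex_intro _ S (conj pA (conj (fun q Mq => uf_S q (Muf q Mq)) eq_refl))))));
      [intros z _ (Sz&a&_); split; assumption|intros z [Sz _]; exact Sz].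
Qed.

(** * Minimal left ideals of O+(S) *)

Lemma Oplus_closed : closed_beta (in_Oplus S).
Proof.
split; [exact Oplus_uf|].
intros p Hp N. apply NNPP; intro N2. apply N. split; [exact Hp|].
intros eps He. apply NNPP; intro N3. apply N2.
exists (compl_S (fun x => S x /\ 0 < x /\ x < eps)). split.
- apply uf_compl; [exact Hp|intros z [s _]; exact s|exact N3].
- intros q Hq qA [_ H]. exact (uf_not_compl q _ Hq (H eps He) qA).
Qed.

Lemma Oplus_containing (G : family) :
  (exists E, G E) ->
  (forall E1 E2, G E1 -> G E2 -> exists E3, G E3 /\ forall s, E3 s -> E1 s /\ E2 s) ->
  (forall E eps, G E -> 0 < eps -> exists s, S s /\ 0 < s /\ s < eps /\ E s) ->
  exists p, in_Oplus S p /\ forall E, G E -> p (fun s => S s /\ E s).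
Proof.
intros [E0 GE0] Hdir Hsmall.
set (G' := fun E' => exists E eps, G E /\ 0 < eps /\ E' = fun s => 0 < s /\ s < eps /\ E s).
destruct (directed_ultrafilter G') as (p&Hp&HGp).
- exists (fun s => 0 < s /\ s < 1 /\ E0 s), E0, 1. split; [exact GE0|]. split; [lra|reflexivity].
- intros E' (E&eps&GE&He&->). destruct (Hsmall E eps GE He) as (s&Ss&h). exists s; auto.
- intros E1' E2' (E1&e1&G1&He1&->) (E2&e2&G2&He2&->).
  destruct (Hdir E1 E2 G1 G2) as (E3&G3&H3).
  assert (m1 : Rmin e1 e2 <= e1) by apply Rmin_l. assert (m2 : Rmin e1 e2 <= e2) by apply Rmin_r.
  exists (fun s => 0 < s /\ s < Rmin e1 e2 /\ E3 s). split.
  + exists E3, (Rmin e1 e2). split; [exact G3|]. split; [apply Rmin_glb_lt; assumption|reflexivity].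
  + intros s (s0&s1&e3). destruct (H3 s e3). split; (split; [|split]); auto; lra.
- assert (small : forall E eps, G E -> 0 < eps -> p (fun s => S s /\ 0 < s /\ s < eps /\ E s)).
  { intros E eps GE He. apply HGp. exists E, eps. auto. }
  exists p. split; [split; [exact Hp|]|].
  + intros eps He. apply (uf_mono p _ _ Hp (small E0 eps GE0 He)); [|intros z [s _]; exact s].
    intros s Ss (_&a&b&_). auto.
  + intros E GE. apply (uf_mono p _ _ Hp (small E 1 GE ltac:(lra))); [|intros z [s _]; exact s].
    intros s Ss (_&_&_&e). auto.
Qed.

Hypothesis Hdense : forall a b, 0 <= a -> a < b -> exists s, S s /\ a < s /\ s < b.

Lemma Oplus_nonempty : exists p, in_Oplus S p.
Proof.
destruct (Oplus_containing (fun E => E = fun _ => True)) as (p&Hp&_).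
- exists (fun _ => True); reflexivity.
- intros E1 E2 -> ->. exists (fun _ => True). auto.
- intros E eps -> He. destruct (Hdense 0 eps) as (s&Ss&a&b); [lra|exact He|]. exists s; auto.
- exists p; exact Hp.
Qed.

Definition left_ideal (C : family -> Prop) :=
  forall u q, in_Oplus S u -> C q -> C (bplus S u q).

(* Minimality is expressed as L = O+(S) + w for every w in L. *)
Definition min_left_ideal (L : family -> Prop) :=
  (forall p, L p -> in_Oplus S p) /\ (exists p, L p) /\ left_ideal L /\
  forall w q, L w -> L q -> exists u, in_Oplus S u /\ q = bplus S u w.

Lemma min_left_ideal_within C0 : closed_beta C0 -> (exists p, C0 p) ->
  (forall p, C0 p -> in_Oplus S p) -> left_ideal C0 ->
  exists L, min_left_ideal L /\ closed_beta L /\ forall p, L p -> C0 p.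
Proof.
intros Cl Ne Sub LI.
destruct (minimal_closed left_ideal C0) as (L&ClL&NeL&LIL&SubL&MinL); auto.
{ intros Ch HCh u q Hu Hq C ChC. apply (HCh C ChC); [exact Hu|apply Hq, ChC]. }
exists L. split; [|split; auto]. split; [|split; [|split]]; auto.
intros w q Lw Lq. assert (Hw : in_Oplus S w) by auto.
apply (MinL (fun r => exists u, in_Oplus S u /\ r = bplus S u w)); [| | |auto|exact Lq].
- apply closed_rtranslate; [exact Oplus_closed|apply Oplus_uf, Hw].
- exists (bplus S w w), w; auto.
- intros u r Hu (v&Hv&->). exists (bplus S u v). split; [apply Oplus_bplus; assumption|].
  rewrite bplus_assoc; auto; apply Oplus_uf; assumption.
- intros r (v&Hv&->). apply LIL; assumption.
Qed.

Lemma min_left_ideal_in_K L p : min_left_ideal L -> L p -> in_K S p.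
Proof.
intros (LO&_&LI&Lmin) Lp. split; [auto|].
intros I (IO&(r&Ir)&Iideal).
destruct (Lmin _ _ (LI r p (IO r Ir) Lp) Lp) as (u&Hu&->).
apply (Iideal u); [exact Hu|]. apply (Iideal p r); auto.
Qed.

Lemma min_left_ideal_rtranslate L v : min_left_ideal L -> in_Oplus S v ->
  min_left_ideal (fun r => exists l, L l /\ r = bplus S l v).
Proof.
intros (LO&(p&Lp)&LI&Lmin) Hv.
assert (assoc : forall a b, in_Oplus S a -> in_Oplus S b ->
                  bplus S (bplus S a b) v = bplus S a (bplus S b v)).
{ intros a b Ha Hb. apply bplus_assoc; apply Oplus_uf; assumption. }
split; [|split; [|split]].
- intros r (l&Ll&->). apply Oplus_bplus; auto.
- exists (bplus S p v), p; auto.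
- intros u r Hu (l&Ll&->). exists (bplus S u l). split; [apply LI; assumption|].
  symmetry; apply assoc; auto.
- intros w q (l1&L1&->) (l2&L2&->). destruct (Lmin l1 l2 L1 L2) as (u&Hu&->).
  exists u. split; [exact Hu|]. apply assoc; auto.
Qed.

Lemma K_min_left_ideal p : in_K S p -> exists L, min_left_ideal L /\ L p.
Proof.
intros [Hp HK]. apply (HK (fun q => exists L, min_left_ideal L /\ L q)).
split; [|split].
- intros q (L&(LO&_)&Lq); auto.
- destruct (min_left_ideal_within (in_Oplus S) Oplus_closed Oplus_nonempty (fun q h => h)
      (fun u q => Oplus_bplus u q)) as (L&HL&_).
  destruct (proj1 (proj2 HL)) as [q Lq]. exists q, L. auto.
- intros q r Hq (L&HL&Lr). split.
  + exists L. split; [exact HL|]. apply (proj1 (proj2 (proj2 HL))); assumption.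
  + exists (fun x => exists l, L l /\ x = bplus S l q).
    split; [apply min_left_ideal_rtranslate; assumption|]. exists r; auto.
Qed.

(* Ellis' theorem: for e in a minimal closed subsemigroup M, both M + e and
   {r in M | r + e = e} are closed subsemigroups, hence equal to M, so
   e + e = e. *)
Lemma closed_semigroup_idempotent N : closed_beta N -> (exists p, N p) ->
  (forall p, N p -> in_Oplus S p) -> (forall p q, N p -> N q -> N (bplus S p q)) ->
  exists e, N e /\ bplus S e e = e.
Proof.
intros Cl Ne Sub SG.
destruct (minimal_closed (fun C => forall p q, C p -> C q -> C (bplus S p q)) N)
  as (M&ClM&(e&Me)&SGM&SubM&MinM); auto.
{ intros Ch HCh p q Hp Hq C ChC. apply (HCh C ChC); [apply Hp|apply Hq]; exact ChC. }
assert (Muf : forall q, M q -> ultrafilter S q) by exact (proj1 ClM).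
assert (He : ultrafilter S e) by auto.
assert (E1 : exists q, M q /\ e = bplus S q e).
{ apply (MinM (fun r => exists q, M q /\ r = bplus S q e)); auto.
  - apply closed_rtranslate; auto.
  - exists (bplus S e e), e; auto.
  - intros p1 p2 (q1&M1&->) (q2&M2&->). exists (bplus S (bplus S q1 e) q2). split; auto.
    rewrite (bplus_assoc (bplus S q1 e) q2 e); auto; apply bplus_uf; auto.
  - intros r (q&Mq&->). auto. }
destruct E1 as (q0&Mq0&Eq0).
assert (E2 : M e /\ (ultrafilter S e /\ bplus S e e = e)).
{ apply (MinM (fun r => M r /\ (ultrafilter S r /\ bplus S r e = e))); auto.
  - apply closed_inter; [exact ClM|]. split.
    + intros r [h _]; exact h.
    + intros r Hr N1. assert (N2 : exists A, bplus S r e A /\ ~ e A).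
      { apply NNPP; intro N3. apply N1. split; [exact Hr|].
        apply uf_sub_eq; [apply bplus_uf; auto|exact He|].
        intros A h. apply NNPP; intro N4. apply N3; eauto. }
      destruct N2 as (A&[SA rA]&NA).
      exists (fun x => S x /\ e (shift S x A)). split; [exact rA|].
      intros r' Hr' r'A [_ E]. apply NA. rewrite <- E. split; assumption.
  - exists q0; auto.
  - intros p1 p2 [M1 [U1 E1]] [M2 [U2 E2]]. split; [auto|]. split; [apply bplus_uf; auto|].
    rewrite bplus_assoc, E2; auto.
  - intros r [h _]; exact h. }
exists e. split; [apply SubM, Me|apply E2].
Qed.

Lemma syndetic_near_zero_mono D D' : syndetic_near_zero S D ->
  (forall s, D s -> D' s) -> syndetic_near_zero S D'.
Proof.
intros H DD' eps He. destruct (H eps He) as (F&delta&h1&h2&h3&h4).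
exists F, delta. split; [|split; [|split]]; auto.
intros s Ss a b. destruct (h4 s Ss a b) as (t&Ht&[s1 s2]). exists t; split; [|split]; auto.
Qed.

Lemma min_left_ideal_syndetic L p C : min_left_ideal L -> L p -> p C ->
  syndetic_near_zero S (fun s => S s /\ p (shift S s C)).
Proof.
intros (LO&_&LI&Lmin) Lp pC.
set (D := fun s => S s /\ p (shift S s C)).
apply NNPP; intro N. apply not_all_ex_not in N as [eps N]. apply imply_to_and in N as [He N].
destruct (Hdense 0 eps) as (t0&St0&t01&t02); [lra|exact He|].
set (small := fun F => forall t, In t F -> S t /\ 0 < t /\ t < eps).
assert (escape : forall F delta, small F -> 0 < delta ->
   exists s, S s /\ 0 < s /\ s < delta /\ forall t, In t F -> ~ D (t + s)).
{ intros F delta HF Hd. apply NNPP; intro N2. apply N.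
  exists (t0 :: F), delta. split; [discriminate|]. split; [intros t [<-|Ht]; auto|].
  split; [exact Hd|]. intros s Ss s0 s1. apply NNPP; intro N3. apply N2.
  exists s. split; [exact Ss|]. split; [exact s0|]. split; [exact s1|].
  intros t Ht Dt. apply N3. exists t. split; [right; exact Ht|]. split; assumption. }
destruct (Oplus_containing (fun E => exists F, small F /\ E = fun s => forall t, In t F -> ~ D (t + s)))
  as (q&Oq&Hq).
- exists (fun s => forall t, In t nil -> ~ D (t + s)), nil. split; [intros t []|reflexivity].
- intros E1 E2 (F1&HF1&->) (F2&HF2&->).
  exists (fun s => forall t, In t (F1 ++ F2) -> ~ D (t + s)). split.
  + exists (F1 ++ F2). split; [|reflexivity]. intros t Ht. apply in_app_or in Ht as [h|h]; auto.
  + intros s h. split; intros t Ht; apply h, in_or_app; auto.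
- intros E delta (F&HF&->) Hd. destruct (escape F delta HF Hd) as (s&h). exists s; exact h.
- assert (Hquf : ultrafilter S q) by (apply Oplus_uf, Oq).
  assert (avoid : forall t, S t -> 0 < t -> t < eps -> q (shift S t (compl_S D))).
  { intros t St t1 t2.
    assert (Ht : small (t :: nil)) by (intros t' [<-|[]]; auto).
    apply (uf_mono q _ _ Hquf (Hq _ (ex_intro _ (t :: nil) (conj Ht eq_refl))));
      [|intros z [Sz _]; exact Sz].
    intros z Sz [_ h]. split; [exact Sz|]. split; [apply Hadd; assumption|]. apply h; left; reflexivity. }
  destruct (Lmin _ _ (LI q p Oq Lp) Lp) as (u&Ou&Eu).
  assert (Huf : ultrafilter S u) by (apply Oplus_uf, Ou).
  rewrite <- bplus_assoc in Eu; [|exact Huf|exact Hquf|apply Oplus_uf, LO, Lp].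
  assert (Huq : ultrafilter S (bplus S u q)) by (apply bplus_uf; assumption).
  assert (inD : bplus S u q D) by (rewrite Eu in pC; exact (proj2 pC)).
  apply (uf_not_compl _ _ Huq inD). split; [intros z [Sz _]; exact Sz|].
  apply (uf_mono u _ _ Huf (proj2 Ou eps He)); [|intros z [Sz _]; exact Sz].
  intros z Sz (_&z1&z2). split; [exact Sz|]. apply avoid; assumption.
Qed.

(** * The dynamical system on beta S *)

Lemma beta_compact_cover {I : Type} (P : I -> R -> Prop) :
  (forall q, ultrafilter S q -> exists i, q (P i)) ->
  exists l : list I, forall z, S z -> exists i, In i l /\ P i z.
Proof.
intros H. apply NNPP; intro N.
set (G := fun E => exists l, E = fun z => forall i, In i l -> ~ P i z).
destruct (directed_ultrafilter G) as (q&Hq&HGq).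
- exists (fun z => forall i, In i nil -> ~ P i z), nil. reflexivity.
- intros E (l&->). apply NNPP; intro N2. apply N. exists l.
  intros z Sz. apply NNPP; intro N3. apply N2. exists z. split; [exact Sz|].
  intros i Hi a. apply N3; eauto.
- intros E1 E2 (l1&->) (l2&->). exists (fun z => forall i, In i (l1 ++ l2) -> ~ P i z). split.
  + exists (l1 ++ l2). reflexivity.
  + intros z h. split; intros i Hi; apply h, in_or_app; auto.
- destruct (H q Hq) as (i&qi).
  destruct (uf_nonempty q _ Hq (uf_and q _ _ Hq qi (HGq _ (ex_intro _ (i :: nil) eq_refl))))
    as (z&_&a&_&na).
  apply (na i); [left|]; auto.
Qed.

Definition beta_point := option {p : family | ultrafilter S p}.

Definition principal (s : R) : family := fun A => sub_S A /\ A s.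
Definition translate (s : R) (q : family) : family := fun A => sub_S A /\ q (shift S s A).

Definition as_point (p : family) : beta_point :=
  match excluded_middle_informative (ultrafilter S p) with
  | left H => Some (exist _ p H)
  | right _ => None
  end.

(* [None] is an identity adjoined to beta S, which the action sends to the
   principal ultrafilters; for s outside S the action is junk. *)
Definition beta_act (s : R) (o : beta_point) : beta_point :=
  match o with
  | None => as_point (principal s)
  | Some q => as_point (translate s (proj1_sig q))
  end.

Definition beta_open (V : beta_point -> Prop) : Prop :=
  forall q, V (Some q) ->
    exists A, proj1_sig q A /\ forall q', proj1_sig q' A -> V (Some q').

Definition beta_set (A : R -> Prop) (o : beta_point) : Prop :=
  match o with Some r => proj1_sig r A | None => False end.

Lemma beta_set_open A : beta_open (beta_set A).
Proof. intros q h. exists A. auto. Qed.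

Lemma principal_uf s : S s -> ultrafilter S (principal s).
Proof.
intros Ss. split; [|split; [|split; [|split; [|split]]]].
- intros A [h _]; exact h.
- split; [intros z h; exact h|exact Ss].
- intros [_ []].
- intros A C [SA a] [_ c]. split; [intros z [u _]; auto|auto].
- intros A C [_ a] SC AC. split; auto.
- intros A SA. destruct (classic (A s)); [left|right]; split; auto. intros z [u _]; exact u.
Qed.

Lemma translate_uf s q : S s -> ultrafilter S q -> ultrafilter S (translate s q).
Proof.
intros Ss Hq.
replace (translate s q) with (bplus S (principal s) q); [apply bplus_uf, Hq; apply principal_uf, Ss|].
apply functional_extensionality; intro A. apply propositional_extensionality.
unfold translate, bplus, principal. split.
- intros [SA [_ [_ h]]]. split; assumption.
- intros [SA h]. split; [exact SA|]. split; [intros z [u _]; exact u|]. split; assumption.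
Qed.

Lemma as_point_uf p (H : ultrafilter S p) : as_point p = Some (exist _ p H).
Proof.
unfold as_point. destruct (excluded_middle_informative (ultrafilter S p)) as [H'|N].
- rewrite (proof_irrelevance _ H H'). reflexivity.
- contradiction.
Qed.

Lemma beta_act_None s (Ss : S s) :
  beta_act s None = Some (exist _ (principal s) (principal_uf s Ss)).
Proof. apply as_point_uf. Qed.

Lemma beta_act_Some s (Ss : S s) q :
  beta_act s (Some q) =
    Some (exist _ (translate s (proj1_sig q)) (translate_uf s _ Ss (proj2_sig q))).
Proof. apply as_point_uf. Qed.

Lemma beta_topology : topology beta_point beta_open.
Proof.
split; [|split; [|split]].
- intros q _. exists S. split; [apply uf_S, (proj2_sig q)|auto].
- intros q [].
- intros U V HU HV q [u v]. destruct (HU q u) as (A&qA&HA). destruct (HV q v) as (C&qC&HC).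
  exists (fun z => A z /\ C z). split; [apply uf_and; auto; apply (proj2_sig q)|].
  intros q' h. assert (Hq' := proj2_sig q'). split.
  + apply HA, (uf_mono _ _ A Hq' h); [intros z _ [a _]; exact a|exact (uf_sub_S _ _ (proj2_sig q) qA)].
  + apply HC, (uf_mono _ _ C Hq' h); [intros z _ [_ c]; exact c|exact (uf_sub_S _ _ (proj2_sig q) qC)].
- intros F HF q (U&FU&Uq). destruct (HF U FU q Uq) as (A&qA&HA).
  exists A. split; [exact qA|]. intros q' h. exists U; auto.
Qed.

Lemma beta_compact : compact beta_point beta_open.
Proof.
intros F HF Hcov. destruct (Hcov None) as (U0&FU0&U0N).
set (I := {UA : (beta_point -> Prop) * (R -> Prop) |
           F (fst UA) /\ sub_S (snd UA) /\ forall q', proj1_sig q' (snd UA) -> fst UA (Some q')}).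
destruct (beta_compact_cover (fun i : I => snd (proj1_sig i))) as (l&Hl).
- intros q Hq. destruct (Hcov (Some (exist _ q Hq))) as (U&FU&Uq).
  destruct (HF U FU _ Uq) as (A&qA&HA). simpl in qA.
  assert (SA : sub_S (fun z => S z /\ A z)) by (intros z [s _]; exact s).
  assert (HA' : forall q' : {p | ultrafilter S p}, proj1_sig q' (fun z => S z /\ A z) -> U (Some q')).
  { intros q' h. apply HA, (uf_mono _ _ _ (proj2_sig q') h); [intros z _ [_ a]; exact a|].
    exact (uf_sub_S _ _ Hq qA). }
  exists (exist _ (U, fun z => S z /\ A z) (conj FU (conj SA HA'))). simpl.
  apply (uf_mono _ _ _ Hq qA); [auto|exact SA].
- exists (U0 :: map (fun i : I => fst (proj1_sig i)) l). split.
  + intros U [<-|HU]; [exact FU0|]. apply in_map_iff in HU as (i&<-&_). exact (proj1 (proj2_sig i)).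
  + intros [q|]; [|exists U0; split; [left|]; auto].
    destruct (uf_in_list (proj1_sig q) l (fun i : I => snd (proj1_sig i)) (proj2_sig q)) as (i&Hi&qi).
    * intros i _. exact (proj1 (proj2 (proj2_sig i))).
    * apply (uf_mono _ S _ (proj2_sig q) (uf_S _ (proj2_sig q))); [intros z Sz _; apply Hl, Sz|].
      intros z (i&_&h). exact (proj1 (proj2 (proj2_sig i)) z h).
    * exists (fst (proj1_sig i)). split; [right; exact (in_map (fun i : I => fst (proj1_sig i)) l i Hi)|].
      exact (proj2 (proj2 (proj2_sig i)) q qi).
Qed.

Lemma beta_hausdorff : hausdorff beta_point beta_open.
Proof.
assert (Some_None : forall q : {p | ultrafilter S p}, exists U V, beta_open U /\ beta_open V /\
          U (Some q) /\ V None /\ forall z, ~ (U z /\ V z)).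
{ intros q. exists (beta_set S), (fun o => o = None). split; [apply beta_set_open|].
  split; [intros r Hr; discriminate|]. split; [exact (uf_S _ (proj2_sig q))|].
  split; [reflexivity|]. intros z [h ->]; exact h. }
intros [p|] [q|] Hne.
- assert (N : exists A, proj1_sig p A /\ ~ proj1_sig q A).
  { apply NNPP; intro N. apply Hne. f_equal.
    destruct p as [p Hp], q as [q Hq]. simpl in N.
    assert (E : p = q) by (apply uf_sub_eq; auto; intros A h; apply NNPP; intro N2; apply N; eauto).
    subst q. f_equal. apply proof_irrelevance. }
  destruct N as (A&pA&NqA).
  exists (beta_set A), (beta_set (compl_S A)).
  split; [apply beta_set_open|]. split; [apply beta_set_open|]. split; [exact pA|].
  split; [apply uf_compl; [apply (proj2_sig q)|exact (uf_sub_S _ _ (proj2_sig p) pA)|exact NqA]|].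
  intros [r|] [h1 h2]; [exact (uf_not_compl _ _ (proj2_sig r) h1 h2)|exact h1].
- apply Some_None.
- destruct (Some_None q) as (U&V&OU&OV&Uq&VN&D).
  exists V, U. split; [exact OV|]. split; [exact OU|]. split; [exact VN|]. split; [exact Uq|].
  intros z [v u]. exact (D z (conj u v)).
- exfalso; auto.
Qed.

Lemma beta_act_continuous s : S s -> continuous beta_point beta_open (beta_act s).
Proof.
intros Ss V HV q Vq. rewrite beta_act_Some with (Ss := Ss) in Vq.
destruct (HV _ Vq) as (A&[SA qA]&HA). simpl in qA.
exists (shift S s A). split; [exact qA|].
intros q' h. rewrite beta_act_Some with (Ss := Ss). apply HA. simpl. split; assumption.
Qed.

Lemma beta_act_add s t : S s -> S t -> forall o, beta_act s (beta_act t o) = beta_act (s + t) o.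
Proof.
intros Ss St [q|]; [rewrite (beta_act_Some t St)|rewrite (beta_act_None t St)];
  unfold beta_act; simpl; f_equal;
  apply functional_extensionality; intro A; apply propositional_extensionality;
  unfold translate, principal, shift.
- assert (Hq := proj2_sig q). split.
  + intros [SA [_ h]]. split; [exact SA|].
    apply (uf_mono _ _ _ Hq h); [|intros z [Sz _]; exact Sz].
    intros z Sz [_ [_ a]]. split; [exact Sz|]. rewrite Rplus_assoc; exact a.
  + intros [SA h]. split; [exact SA|]. split; [intros z [Sz _]; exact Sz|].
    apply (uf_mono _ _ _ Hq h); [|intros z [Sz _]; exact Sz].
    intros z Sz [_ a]. split; [exact Sz|]. split; [apply Hadd; assumption|].
    rewrite <- Rplus_assoc; exact a.
- split.
  + intros [SA [_ [_ h]]]. split; assumption.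
  + intros [SA h]. split; [exact SA|]. split; [intros z [Sz _]; exact Sz|]. split; assumption.
Qed.

Lemma beta_dynamical_system : dynamical_system S beta_point beta_open beta_act.
Proof.
split; [exact beta_topology|]. split; [exact beta_compact|]. split; [exact beta_hausdorff|].
split; [exact beta_act_continuous|exact beta_act_add].
Qed.

Lemma beta_return_times B : sub_S B ->
  forall s, B s <-> S s /\ beta_set B (beta_act s None).
Proof.
intros SB s. split.
- intros b. split; [exact (SB s b)|]. rewrite (beta_act_None s (SB s b)). simpl. split; assumption.
- intros [Ss h]. rewrite (beta_act_None s Ss) in h. apply h.
Qed.

(* A neighbourhood of the diagonal contains a box around (p, p) cut out by
   sets A and C of p; as C is in p + p, some small s in A has -s + C in p,
   which puts (T_s e, T_s p) in the box. *)
Lemma beta_idempotent_proximal (p : {q : family | ultrafilter S q}) :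
  in_Oplus S (proj1_sig p) -> bplus S (proj1_sig p) (proj1_sig p) = proj1_sig p ->
  proximal_near_zero S beta_point beta_open beta_act None (Some p).
Proof.
destruct p as [p Hp]; simpl. intros [_ Op] Ep W (W0&PW0&DW0&SW0) eps He.
destruct (PW0 _ _ (DW0 (Some (exist _ p Hp)))) as (A'&C'&OA&OC&Ap&Cp&HAC).
destruct (OA _ Ap) as (A&pA&HA). destruct (OC _ Cp) as (C&pC&HC). simpl in pA, pC.
assert (pC2 : bplus S p p C) by (rewrite Ep; exact pC).
destruct (uf_nonempty p _ Hp (uf_and p _ _ Hp pA (uf_and p _ _ Hp (proj2 pC2) (Op eps He))))
  as (s&Ss&a&(_&ps)&(_&s1&s2)).
exists s. split; [exact Ss|]. split; [exact s1|]. split; [exact s2|].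
apply SW0, HAC.
- rewrite (beta_act_None s Ss). apply HA. simpl. split; [exact (uf_sub_S _ _ Hp pA)|exact a].
- rewrite (beta_act_Some s Ss). apply HC. simpl. split; [exact (uf_sub_S _ _ Hp pC)|exact ps].
Qed.

Lemma beta_min_left_ideal_unif_rec L (p : {q : family | ultrafilter S q}) :
  min_left_ideal L -> L (proj1_sig p) ->
  unif_rec_near_zero S beta_point beta_open beta_act (Some p).
Proof.
intros HL Lp W (V&OV&Vp&VW).
destruct (OV p Vp) as (C&pC&HC).
apply (syndetic_near_zero_mono (fun s => S s /\ proj1_sig p (shift S s C))).
- exact (min_left_ideal_syndetic L _ C HL Lp pC).
- intros s [Ss h]. split; [exact Ss|]. apply VW. rewrite (beta_act_Some s Ss). apply HC.
  simpl. split; [exact (uf_sub_S _ _ (proj2_sig p) pC)|exact h].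
Qed.

Lemma central_near_zero_dynamical B : sub_S B -> central_near_zero S B ->
  exists (X : Type) (op : (X -> Prop) -> Prop) (T : R -> X -> X),
    dynamical_system S X op T /\
    exists (x y : X) (U : X -> Prop),
      nbhd X op y U /\
      proximal_near_zero S X op T x y /\
      unif_rec_near_zero S X op T y /\
      (forall s, B s <-> (S s /\ U (T s x))).
Proof.
intros SB (p&Kp&Ep&pB).
destruct (K_min_left_ideal p Kp) as (L&HL&Lp).
assert (Op : in_Oplus S p) by (apply (proj1 HL), Lp).
assert (Hp : ultrafilter S p) by (apply Oplus_uf, Op).
assert (Ep' : bplus S p p = p) by (apply uf_sub_eq; [apply bplus_uf| |intros A; apply Ep]; auto).
exists beta_point, beta_open, beta_act. split; [exact beta_dynamical_system|].
exists None, (Some (exist _ p Hp)), (beta_set B). split; [|split; [|split]].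
- exists (beta_set B). split; [apply beta_set_open|]. split; [exact pB|auto].
- apply beta_idempotent_proximal; assumption.
- apply (beta_min_left_ideal_unif_rec L); assumption.
- apply beta_return_times, SB.
Qed.

(** * Limits along ultrafilters *)

Section Dynamics.
Variable X : Type.
Variable op : (X -> Prop) -> Prop.
Variable T : R -> X -> X.
Hypothesis Htop : topology X op.
Hypothesis Hcpt : compact X op.
Hypothesis Hhd : hausdorff X op.
Hypothesis Hcont : forall s, S s -> continuous X op (T s).
Hypothesis Hlaw : forall s t, S s -> S t -> forall x, T s (T t x) = T (s + t) x.

Definition ulim (q : family) (z w : X) :=
  forall V, op V -> V w -> q (fun s => S s /\ V (T s z)).

Definition adherent (V : X -> Prop) (a : X) :=
  forall O, op O -> O a -> exists b, O b /\ V b.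

Lemma open_full : op (fun _ => True).
Proof. apply Htop. Qed.

Lemma open_and U V : op U -> op V -> op (fun x => U x /\ V x).
Proof. apply Htop. Qed.

Lemma ulim_exists q z : ultrafilter S q -> exists w, ulim q z w.
Proof.
intros Hq. apply NNPP; intro N.
set (small := fun V => op V /\ ~ q (fun s => S s /\ V (T s z))).
destruct (Hcpt small) as (l&Hl&Hcov).
- intros U [h _]; exact h.
- intros w. apply NNPP; intro N2. apply N. exists w. intros V OV Vw.
  apply NNPP; intro N3. apply N2. exists V. repeat split; assumption.
- destruct (uf_in_list q l (fun V s => S s /\ V (T s z)) Hq) as (V&HV&qV).
  + intros V _ s [h _]; exact h.
  + apply (uf_mono _ S _ Hq (uf_S _ Hq)); [|intros s (V&_&[h _]); exact h].
    intros s Ss _. destruct (Hcov (T s z)) as (V&HV&Vs). exists V; auto.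
  + exact (proj2 (Hl V HV) qV).
Qed.

Lemma ulim_unique q z w1 w2 : ultrafilter S q -> ulim q z w1 -> ulim q z w2 -> w1 = w2.
Proof.
intros Hq H1 H2. apply NNPP; intro N.
destruct (Hhd w1 w2 N) as (U&V&OU&OV&Uw&Vw&D).
destruct (uf_nonempty q _ Hq (uf_and q _ _ Hq (H1 U OU Uw) (H2 V OV Vw))) as (s&_&[_ a]&[_ b]).
exact (D _ (conj a b)).
Qed.

(* Compact Hausdorff spaces are regular: cover X by V and by open sets missing
   some neighbourhood of w, and intersect the finitely many neighbourhoods. *)
Lemma open_regular V w : op V -> V w ->
  exists V', op V' /\ V' w /\ forall a, adherent V' a -> V a.
Proof.
intros OV Vw.
set (F := fun P => P = V \/ (op P /\ exists O, op O /\ O w /\ forall b, ~ (O b /\ P b))).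
destruct (Hcpt F) as (l&Hl&Hcov).
- intros P [->|[h _]]; assumption.
- intros a. destruct (classic (V a)) as [h|h]; [exists V; split; [left|]; auto|].
  assert (ne : w <> a) by (intro e; subst; contradiction).
  destruct (Hhd w a ne) as (O&P&OO&OP&Ow&Pa&D).
  exists P. split; [right; split; [exact OP|exists O; auto]|exact Pa].
assert (K : exists O, op O /\ O w /\ forall P, In P l -> P = V \/ forall b, ~ (O b /\ P b)).
{ clear Hcov. induction l as [|P l IH].
  - exists (fun _ => True). split; [apply open_full|]. split; [exact I|]. intros Q [].
  - destruct IH as (O&OO&Ow&HO); [intros Q HQ; apply Hl; right; exact HQ|].
    destruct (Hl P (or_introl eq_refl)) as [->|[_ (O'&OO'&Ow'&D')]].
    + exists O. split; [exact OO|]. split; [exact Ow|]. intros Q [<-|HQ]; auto.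
    + exists (fun b => O b /\ O' b). split; [apply open_and; assumption|]. split; [split; assumption|].
      intros Q [<-|HQ].
      * right. intros b [[_ c] d]. exact (D' b (conj c d)).
      * destruct (HO Q HQ) as [h|h]; [left; exact h|].
        right. intros b [[c _] d]. exact (h b (conj c d)). }
destruct K as (O&OO&Ow&HO). exists O. split; [exact OO|]. split; [exact Ow|].
intros a Ha. apply NNPP; intro Na.
destruct (Hcov a) as (P&HP&Pa).
destruct (HO P HP) as [->|D]; [contradiction|].
destruct (Hl P HP) as [->|[OP _]]; [contradiction|].
destruct (Ha P OP Pa) as (b&Pb&Ob). exact (D b (conj Ob Pb)).
Qed.

Lemma ulim_adherent q z w V : ultrafilter S q -> ulim q z w ->
  q (fun s => S s /\ V (T s z)) -> adherent V w.
Proof.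
intros Hq Hl HV O OO Ow.
destruct (uf_nonempty q _ Hq (uf_and q _ _ Hq (Hl O OO Ow) HV)) as (s&_&[_ a]&[_ b]).
exists (T s z). split; assumption.
Qed.

Lemma ulim_bplus q r z w v : ultrafilter S q -> ultrafilter S r ->
  ulim q z w -> ulim r w v -> ulim (bplus S r q) z v.
Proof.
intros Hq Hr H1 H2 V OV Vv. split; [intros s [a _]; exact a|].
apply (uf_mono _ _ _ Hr (H2 V OV Vv)); [|intros s [a _]; exact a].
intros s Ss [_ Vs]. split; [exact Ss|].
apply (uf_mono _ _ _ Hq (H1 (fun a => V (T s a)) (Hcont s Ss V OV) Vs)); [|intros t [a _]; exact a].
intros t St [_ h]. split; [exact St|]. split; [apply Hadd; assumption|]. rewrite <- Hlaw; assumption.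
Qed.

Lemma adherent_act t V z : S t -> adherent (fun b => V (T t b)) z -> adherent V (T t z).
Proof.
intros St H O OO Oz. destruct (H (fun b => O (T t b)) (Hcont t St O OO) Oz) as (b&h1&h2).
exists (T t b). split; assumption.
Qed.

Lemma closed_ulim z w : closed_beta (fun v => ultrafilter S v /\ ulim v z w).
Proof.
split; [intros v [h _]; exact h|].
intros v Hv Nv. assert (Nl : ~ ulim v z w) by tauto.
destruct (ulim_exists v z Hv) as (c&Hc).
assert (ne : c <> w) by (intro e; subst; contradiction).
destruct (Hhd c w ne) as (Vc&Vw&OVc&OVw&Vcc&Vww&D).
destruct (open_regular Vc c OVc Vcc) as (Vc'&OVc'&Vc'c&Cc).
exists (fun s => S s /\ Vc' (T s z)). split; [apply Hc; assumption|].
intros v' Hv' h [_ Hl']. exact (D w (conj (Cc w (ulim_adherent v' z w _ Hv' Hl' h)) Vww)).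
Qed.

Lemma diag_nbhd_full : diag_nbhd X op (fun _ => True).
Proof.
exists (fun _ => True). split; [|split]; auto.
intros a b _. exists (fun _ => True), (fun _ => True).
split; [apply open_full|]. split; [apply open_full|]. auto.
Qed.

Lemma diag_nbhd_and W1 W2 : diag_nbhd X op W1 -> diag_nbhd X op W2 ->
  diag_nbhd X op (fun z => W1 z /\ W2 z).
Proof.
intros (V1&P1&D1&S1) (V2&P2&D2&S2).
exists (fun z => V1 z /\ V2 z). split; [|split]; [|intros x; split; auto|intros z []; auto].
intros a b [h1 h2]. destruct (P1 a b h1) as (A1&C1&OA1&OC1&a1&c1&H1).
destruct (P2 a b h2) as (A2&C2&OA2&OC2&a2&c2&H2).
exists (fun x => A1 x /\ A2 x), (fun x => C1 x /\ C2 x).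
split; [apply open_and; assumption|]. split; [apply open_and; assumption|].
split; [split; assumption|]. split; [split; assumption|]. intros u v [] []. auto.
Qed.

(* The complement of the product of the closures of the two neighbourhoods. *)
Lemma diag_nbhd_separating a b : a <> b ->
  exists Va Vb W, op Va /\ op Vb /\ Va a /\ Vb b /\ diag_nbhd X op W /\
    forall u v, Va u -> Vb v -> ~ W (u, v).
Proof.
intros Nab.
destruct (Hhd a b Nab) as (Va&Vb&OVa&OVb&Vaa&Vbb&Dab).
destruct (open_regular Va a OVa Vaa) as (Va'&OVa'&Va'a&Ca).
destruct (open_regular Vb b OVb Vbb) as (Vb'&OVb'&Vb'b&Cb).
assert (escape : forall V u, ~ adherent V u -> exists O, op O /\ O u /\ forall u', O u' -> ~ adherent V u').
{ intros V u Nu. apply not_all_ex_not in Nu as [O Nu].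
  apply imply_to_and in Nu as [OO Nu]. apply imply_to_and in Nu as [Ou Nu].
  exists O. split; [exact OO|]. split; [exact Ou|]. intros u' Ou' Hu'.
  destruct (Hu' O OO Ou') as (c&Oc&Vc). apply Nu. exists c; auto. }
set (W := fun uv : X * X => ~ (adherent Va' (fst uv) /\ adherent Vb' (snd uv))).
exists Va', Vb', W. split; [exact OVa'|]. split; [exact OVb'|]. split; [exact Va'a|].
split; [exact Vb'b|]. split.
- exists W. split; [|split; [|auto]].
  + intros u v Huv. apply not_and_or in Huv as [h|h].
    * destruct (escape _ _ h) as (O&OO&Ou&HO).
      exists O, (fun _ => True). split; [exact OO|]. split; [apply open_full|].
      split; [exact Ou|]. split; [exact I|]. intros u' v' Ou' _ [c _]. exact (HO u' Ou' c).
    * destruct (escape _ _ h) as (O&OO&Ov&HO).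
      exists (fun _ => True), O. split; [apply open_full|]. split; [exact OO|].
      split; [exact I|]. split; [exact Ov|]. intros u' v' _ Ov' [_ c]. exact (HO v' Ov' c).
  + intros z [c1 c2]. exact (Dab z (conj (Ca z c1) (Cb z c2))).
- intros u v Vu Vv Wuv. apply Wuv. split; intros O OO Ou; [exists u|exists v]; auto.
Qed.

Lemma proximal_common_ulim x y : proximal_near_zero S X op T x y ->
  exists p a, in_Oplus S p /\ ulim p x a /\ ulim p y a.
Proof.
intros Hprox.
destruct (Oplus_containing (fun E => exists W, diag_nbhd X op W /\ E = fun s => W (T s x, T s y)))
  as (p&Op&HpW).
- exists (fun _ => True), (fun _ => True). split; [exact diag_nbhd_full|reflexivity].
- intros E1 E2 (W1&HW1&->) (W2&HW2&->). exists (fun s => W1 (T s x, T s y) /\ W2 (T s x, T s y)).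
  split; [|auto]. exists (fun z => W1 z /\ W2 z). split; [apply diag_nbhd_and; assumption|reflexivity].
- intros E eps (W&HW&->) He. destruct (Hprox W HW eps He) as (s&h). exists s; exact h.
- assert (Hp : ultrafilter S p) by (apply Oplus_uf, Op).
  destruct (ulim_exists p x Hp) as (a&Ha). destruct (ulim_exists p y Hp) as (b&Hb).
  exists p, a. split; [exact Op|]. split; [exact Ha|].
  replace a with b; [exact Hb|]. apply NNPP; intro N.
  destruct (diag_nbhd_separating a b (fun e => N (eq_sym e))) as (Va&Vb&W&OVa&OVb&Vaa&Vbb&HW&D).
  destruct (uf_nonempty p _ Hp (uf_and p _ _ Hp (HpW _ (ex_intro _ W (conj HW eq_refl)))
      (uf_and p _ _ Hp (Ha Va OVa Vaa) (Hb Vb OVb Vbb)))) as (s&_&(_&Ws)&(_&h1)&(_&h2)).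
  exact (D _ _ h1 h2 Ws).
Qed.

(* A uniformly recurrent y returns from each of its O+-limits z: for a
   neighbourhood V of y and eps > 0, syndeticity puts some T_t z with t < eps
   into the closure of a smaller neighbourhood V' of y. *)
Lemma unif_rec_ulim_return y r z : unif_rec_near_zero S X op T y ->
  in_Oplus S r -> ulim r y z -> exists q, in_Oplus S q /\ ulim q z y.
Proof.
intros HUR Or Hz. assert (Hr : ultrafilter S r) by (apply Oplus_uf, Or).
destruct (Oplus_containing (fun E => exists V, op V /\ V y /\ E = fun s => V (T s z)))
  as (q&Oq&HqV).
- exists (fun _ => True), (fun _ => True). split; [apply open_full|auto].
- intros E1 E2 (V1&O1&V1y&->) (V2&O2&V2y&->). exists (fun s => V1 (T s z) /\ V2 (T s z)).
  split; [|auto]. exists (fun b => V1 b /\ V2 b). split; [apply open_and; assumption|auto].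
- intros E eps (V&OV&Vy&->) He.
  destruct (open_regular V y OV Vy) as (V'&OV'&V'y&CV').
  destruct (HUR V' (ex_intro _ V' (conj OV' (conj V'y (fun a h => h)))) eps He)
    as (F&delta&_&HF&Hd&Hsyn).
  destruct (uf_in_list r F (fun t => shift S t (fun s => S s /\ V' (T s y))) Hr) as (t&Ht&rt).
  + intros t _ s [h _]; exact h.
  + apply (uf_mono _ _ _ Hr (proj2 Or delta Hd)); [|intros s (t&_&[h _]); exact h].
    intros s Ss (_&s1&s2). apply Hsyn; assumption.
  + destruct (HF t Ht) as (St&t1&t2). exists t. split; [exact St|]. split; [exact t1|].
    split; [exact t2|]. apply CV', adherent_act; [exact St|].
    apply (ulim_adherent r y z); [exact Hr|exact Hz|].
    apply (uf_mono _ _ _ Hr rt); [|intros s [h _]; exact h].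
    intros s Ss [_ [_ h]]. split; [exact Ss|]. rewrite Hlaw; assumption.
- exists q. split; [exact Oq|]. intros V OV Vy. exact (HqV _ (ex_intro _ V (conj OV (conj Vy eq_refl)))).
Qed.

Lemma dynamical_central_idempotent x y : proximal_near_zero S X op T x y ->
  unif_rec_near_zero S X op T y ->
  exists u, in_K S u /\ bplus S u u = u /\ ulim u x y.
Proof.
intros Hprox HUR.
destruct (proximal_common_ulim x y Hprox) as (p&a&Op&Hpx&Hpy).
assert (Hp : ultrafilter S p) by (apply Oplus_uf, Op).
destruct (min_left_ideal_within (fun r => exists v, in_Oplus S v /\ r = bplus S v p))
  as (L&HL&ClL&SubL).
- apply closed_rtranslate; [exact Oplus_closed|exact Hp].
- exists (bplus S p p), p. auto.
- intros r (v&Ov&->). apply Oplus_bplus; assumption.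
- intros w r Ow (v&Ov&->). exists (bplus S w v). split; [apply Oplus_bplus; assumption|].
  symmetry; apply bplus_assoc; [apply Oplus_uf..|]; assumption.
- assert (agree : forall v, L v -> exists c, ulim v x c /\ ulim v y c).
  { intros v Lv. destruct (SubL v Lv) as (w&Ow&->).
    assert (Hw : ultrafilter S w) by (apply Oplus_uf, Ow).
    destruct (ulim_exists w a Hw) as (c&Hc). exists c.
    split; apply (ulim_bplus p w _ a c); assumption. }
  pose proof HL as (LO&(r&Lr)&LI&_).
  assert (Hr : ultrafilter S r) by (apply Oplus_uf, LO, Lr).
  destruct (ulim_exists r y Hr) as (z&Hz).
  destruct (unif_rec_ulim_return y r z HUR (LO r Lr) Hz) as (q&Oq&Hq).
  destruct (closed_semigroup_idempotent (fun v => L v /\ (ultrafilter S v /\ ulim v y y)))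
    as (u&(Lu&Hu&Huy)&Eu).
  + apply closed_inter; [exact ClL|apply closed_ulim].
  + exists (bplus S q r). split; [apply LI; assumption|].
    split; [apply bplus_uf; [apply Oplus_uf, Oq|exact Hr]|].
    apply (ulim_bplus r q y z y); [exact Hr|apply Oplus_uf, Oq|exact Hz|exact Hq].
  + intros v [Lv _]. exact (LO v Lv).
  + intros v1 v2 [L1 [U1 E1]] [L2 [U2 E2]]. split; [apply LI; [apply LO|]; assumption|].
    split; [apply bplus_uf; assumption|]. apply (ulim_bplus v2 v1 y y y); assumption.
  + exists u. split; [apply (min_left_ideal_in_K L); assumption|]. split; [exact Eu|].
    destruct (agree u Lu) as (c&Hx&Hy). rewrite (ulim_unique u y y c Hu Huy Hy). exact Hx.
Qed.

End Dynamics.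
End BetaS.

Theorem theorem2p11 (S : R -> Prop) (HS : dense_subsemigroup S)
  (B : R -> Prop) (HB : forall z, B z -> S z) :
  central_near_zero S B <->
  exists (X : Type) (op : (X -> Prop) -> Prop) (T : R -> X -> X),
    dynamical_system S X op T /\
    exists (x y : X) (U : X -> Prop),
      nbhd X op y U /\
      proximal_near_zero S X op T x y /\
      unif_rec_near_zero S X op T y /\
      (forall s, B s <-> (S s /\ U (T s x))).
Proof.
destruct HS as (_&Hadd&Hdense). split.
- exact (central_near_zero_dynamical S Hadd Hdense B HB).
- intros (X&op&T&(Htop&Hcpt&Hhd&Hcont&Hlaw)&x&y&U&(V&OV&Vy&VU)&Hprox&HUR&HBU).
  destruct (dynamical_central_idempotent S Hadd X op T Htop Hcpt Hhd Hcont Hlaw x y Hprox HUR)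
    as (u&Ku&Eu&Hl).
  exists u. split; [exact Ku|]. split; [rewrite Eu; intro A; tauto|].
  apply (uf_mono S u _ B (Oplus_uf S u (proj1 Ku)) (Hl V OV Vy)); [|exact HB].
  intros s Ss [_ h]. apply HBU. split; [exact Ss|]. apply VU, h.
Qed.
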